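(* Let $n\ge 1$ and $\mathbf{x}\in\{0,1\}^n$. Let $\omega=\omega(\mathbf{x}')$ be the Hamming weight of the derivative sequence $\mathbf{x}'$, let $m$ be the number of 1-runs in $\mathbf{x}'$, and let $m_1$ be the number of 1-runs of length $1$ in $\mathbf{x}'$. Then (a) $|\Phi_1(\mathbf{x})| = 1+\omega = r(\mathbf{x})$; (b) $|\Phi_2(\mathbf{x})| = 1+m+\binom{\omega}{2}$; (c) $|\Phi_3(\mathbf{x})| = 1+m_1+m(\omega-3)+\binom{\omega}{3}-\binom{\omega}{2}+2\omega$.
   Context: A grain pattern of length $n$ is a subset $E\subseteq\{2,\dots,n\}$ containing no two consecutive integers. For such $E$, the map $\phi_E:\{0,1\}^n\to\{0,1\}^n$ sends $\mathbf{x}=(x_1,\dots,x_n)$ to $\mathbf{y}=(y_1,\dots,y_n)$ with $y_j=x_{j-1}$ if $j\in E$ and $y_j=x_j$ otherwise. For $t\ge0$, $\mathcal{E}_{n,t}$ is the set of grain patterns $E$ of length $n$ with $|E|\le t$, and $\Phi_t(\mathbf{x})=\{\phi_E(\mathbf{x}):E\in\mathcal{E}_{n,t}\}$ (a set, so distinct patterns giving the same sequence are counted once). A run of $\mathbf{x}$ is a maximal block of consecutive identical symbols; $r(\mathbf{x})$ is the number of runs of $\mathbf{x}$. The derivative sequence of $\mathbf{x}$ is $\mathbf{x}'=(x'_2,\dots,x'_n)$ with $x'_j=x_{j-1}\oplus x_j$ (addition mod 2); a 1-run of $\mathbf{x}'$ is a maximal block of consecutive 1s in $\mathbf{x}'$.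 Binomial coefficients $\binom{a}{b}$ are $0$ when $b>a\ge 0$. *)

From mathcomp Require Import all_boot all_order all_algebra.
Set Implicit Arguments. Unset Strict Implicit. Unset Printing Implicit Defensive.

(* Positions are 0-indexed: paper position j corresponds to index j-1. *)

Definition grain_pattern n (E : {set 'I_n}) : bool :=
  [forall i in E, 0 < (i : nat)] &&
  [forall i in E, forall j in E, (i : nat).+1 != j].

Definition phi n (E : {set 'I_n}) (x : n.-tuple bool) : n.-tuple bool :=
  [tuple (if i \in E then nth false x (i : nat).-1 else nth false x i) | i < n].

Definition Phi n (t : nat) (x : n.-tuple bool) : {set n.-tuple bool} :=
  [set phi E x | E in [set E : {set 'I_n} | grain_pattern E && (#|E| <= t)]].

Definition runs (s : seq bool) : nat :=
  size [seq i <- iota 0 (size s) | (i == 0) || (nth false s i != nth false s i.-1)].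

Definition dseq (s : seq bool) : seq bool :=
  [seq (nth false s i (+) nth false s i.+1) | i <- iota 0 (size s).-1].

Definition weight (s : seq bool) : nat := count id s.

Definition one_runs (s : seq bool) : nat :=
  size [seq i <- iota 0 (size s) |
         nth false s i && ((i == 0) || ~~ nth false s i.-1)].

Definition one_runs_len1 (s : seq bool) : nat :=
  size [seq i <- iota 0 (size s) |
         [&& nth false s i, ((i == 0) || ~~ nth false s i.-1)
           & ~~ nth false s i.+1]].

From mathcomp Require Import all_boot all_order all_algebra zify.

Set Implicit Arguments.
Unset Strict Implicit.
Unset Printing Implicit Defensive.

(* Let a := false :: x' mark the positions j with x_{j-1} <> x_j, the only
   positions where a grain can change x.  Then y |-> y xor x maps Phi_t(x)
   bijectively onto the masks b <= a with no two adjacent ones and at most t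
   ones.  Their number N_t(a) satisfies N_{t+1}(1 :: a) = N_{t+1}(a) + N_t(tail a),
   because a chosen one blocks the next position; hence N_1 = 1 + w,
   N_2 = 1 + w + C(w,2) - p and N_3 = N_2 + C(w,3) - (w-2) p + q, where p and q
   count the adjacent pairs and triples of ones in x'.  Along the 1-runs of x'
   one finds p = w - m and q = w + m1 - 2m. *)

Fixpoint sparse (b : seq bool) : bool :=
  if b is c :: b' then ~~ (c && head false b') && sparse b' else true.

Definition admissible (a : seq bool) (t : nat) (b : seq bool) : bool :=
  [&& all2 implb b a, sparse b & count id b <= t].

Lemma all2_implbP (b a : seq bool) :
  reflect (size b = size a /\ forall i, nth false b i -> nth false a i)
          (all2 implb b a).
Proof.
elim: b a => [|c b IHb] [|x a] /=.
- by left; split=> // i; rewrite nth_nil.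
- by right=> -[].
- by right=> -[].
apply: (iffP andP) => [[/implyP cx /IHb [sz ba]] | [[sz] ba]].
  by split=> [|[|i]]; [rewrite sz | exact: cx | exact: ba].
by split; [apply/implyP/(ba 0) | apply/IHb; split=> // i; apply: (ba i.+1)].
Qed.

Lemma sparseP (b : seq bool) :
  reflect (forall i, ~~ (nth false b i && nth false b i.+1)) (sparse b).
Proof.
elim: b => [|c b IHb] /=; first by left=> i; rewrite nth_nil.
rewrite -nth0; apply: (iffP andP) => [[cb /IHb sb] [|i] | sb]; [exact: cb | exact: sb |].
by split; [exact: (sb 0) | apply/IHb => i; exact: (sb i.+1)].
Qed.

(* [blocked] records that the previous bit of the mask is set. *)
Fixpoint admissibles (a : seq bool) (t : nat) (blocked : bool) : seq (seq bool) :=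
  if a is x :: a' then
    map (cons false) (admissibles a' t false) ++
    (if [&& x, ~~ blocked & 0 < t] then map (cons true) (admissibles a' t.-1 true)
     else [::])
  else [:: [::]].

Lemma mem_map_cons (c0 c : bool) (b : seq bool) (s : seq (seq bool)) :
  (c :: b \in map (cons c0) s) = (c == c0) && (b \in s).
Proof. by apply/mapP/andP => [[b' b's [-> ->]] | [/eqP -> bs]]; last exists b. Qed.

Lemma nil_notin_map_cons (c : bool) (s : seq (seq bool)) :
  ([::] \in map (cons c) s) = false.
Proof. by apply/negbTE/mapP => -[]. Qed.

Lemma mem_admissibles a t blocked b :
  (b \in admissibles a t blocked) = admissible a t b && (blocked ==> ~~ head false b).
Proof.
elim: a t blocked b => [|x a IHa] t blocked [|[] b] //=; first by rewrite implybT.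
- by rewrite mem_cat; case: ifP => _; rewrite !nil_notin_map_cons.
- rewrite mem_cat mem_map_cons /= /admissible /= implybF.
  case: t => [|t]; first by rewrite !andbF.
  case: x blocked => [] []; rewrite /= ?andbF ?orbF ?mem_map_cons //= IHa /admissible ltnS.
  by case: (head false b); rewrite /= ?andbT ?andbF.
- rewrite mem_cat mem_map_cons /= IHa /admissible /= implybT andbT.
  by case: ifP => _; rewrite ?mem_map_cons ?orbF.
Qed.

Lemma uniq_admissibles a t blocked : uniq (admissibles a t blocked).
Proof.
have cons_inj (c : bool) : injective (cons c) by move=> ? ? [].
elim: a t blocked => [|x a IHa] t blocked //=; rewrite cat_uniq map_inj_uniq //.
case: ifP => _; rewrite ?andbT // map_inj_uniq // !IHa /=.
by rewrite andbT; apply/hasPn => _ /mapP [b _ ->]; rewrite mem_map_cons.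
Qed.

Definition n_admissible (a : seq bool) (t : nat) : nat :=
  size (admissibles a t false).

Lemma n_admissible0 a : n_admissible a 0 = 1.
Proof. by rewrite /n_admissible; elim: a => //= x a; rewrite !andbF cats0 size_map. Qed.

Lemma n_admissible_false a t : n_admissible (false :: a) t = n_admissible a t.
Proof. by rewrite /n_admissible /= cats0 size_map. Qed.

Lemma size_admissibles_blocked a t :
  size (admissibles a t true) = n_admissible (behead a) t.
Proof. by case: a => //= x a; rewrite andbF cats0 size_map. Qed.

Lemma n_admissible_true a t :
  n_admissible (true :: a) t.+1 = n_admissible a t.+1 + n_admissible (behead a) t.
Proof. by rewrite {1}/n_admissible /= size_cat !size_map size_admissibles_blocked. Qed.

Lemma seq_ind2 (T : Type) (P : seq T -> Prop) :
  P [::] -> (forall x a, P a -> P (behead a) -> P (x :: a)) -> forall a, P a.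
Proof.
move=> P0 Pcons a; suff [] : P a /\ P (behead a) by [].
by elim: a => [|x a [Pa Pa']] //; split; [apply: Pcons | ].
Qed.

Fixpoint adj_pairs (a : seq bool) : nat :=
  if a is x :: a' then (x && head false a') + adj_pairs a' else 0.

Fixpoint adj_triples (a : seq bool) : nat :=
  if a is x :: a' then [&& x, head false a' & head false (behead a')] + adj_triples a'
  else 0.

Lemma n_admissible1 a : n_admissible a 1 = 1 + count id a.
Proof.
elim/seq_ind2: a => // -[] a IHa IHa'; rewrite ?n_admissible_false //.
by rewrite n_admissible_true n_admissible0 IHa; case: a {IHa IHa'} => //= *; lia.
Qed.

Lemma n_admissible2 a :
  n_admissible a 2 + adj_pairs a = 1 + count id a + 'C(count id a, 2).
Proof.
elim/seq_ind2: a => // -[] a IHa IHa'; rewrite ?n_admissible_false //.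
rewrite n_admissible_true n_admissible1.
case: a IHa {IHa'} => [|y a] //=; rewrite binS bin1.
by case: y => /=; lia.
Qed.

Lemma n_admissible3 a :
  let w := count id a in
  n_admissible a 3 + adj_pairs a * w =
  1 + w + 'C(w, 2) + 'C(w, 3) + adj_pairs a + adj_triples a.
Proof.
elim/seq_ind2: a => // -[] a IHa _; rewrite /= ?n_admissible_false //.
rewrite n_admissible_true; have := n_admissible2 (behead a).
case: a IHa => [|y a] //= IHa.
by case: y IHa; case: (head false a); rewrite /= ?add0n ?add1n !binS !bin1 ?bin0; nia.
Qed.

Lemma count_iota0S (P : pred nat) k :
  count P (iota 0 k.+1) = P 0 + count (P \o succn) (iota 0 k).
Proof. by rewrite /= -[1]/(1 + 0) iotaDl count_map. Qed.

Fixpoint run_starts (prev : bool) (d : seq bool) : nat :=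
  if d is y :: d' then (y && ~~ prev) + run_starts y d' else 0.

Fixpoint single_runs (prev : bool) (d : seq bool) : nat :=
  if d is y :: d' then [&& y, ~~ prev & ~~ head false d'] + single_runs y d' else 0.

Lemma one_runsE d : one_runs d = run_starts false d.
Proof.
have count_starts prev s : count (fun i => nth false s i && ~~ nth false (prev :: s) i)
    (iota 0 (size s)) = run_starts prev s.
  by elim: s prev => // y s IHs prev; rewrite count_iota0S /= IHs.
by rewrite /one_runs size_filter -count_starts; apply: eq_count => -[].
Qed.

Lemma one_runs_len1E d : one_runs_len1 d = single_runs false d.
Proof.
have count_singles prev s : count (fun i =>
      [&& nth false s i, ~~ nth false (prev :: s) i & ~~ nth false s i.+1])
    (iota 0 (size s)) = single_runs prev s.
  by elim: s prev => // y s IHs prev; rewrite count_iota0S /= IHs nth0.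
by rewrite /one_runs_len1 size_filter -count_singles; apply: eq_count => -[].
Qed.

Lemma adj_pairs_one_runs d : adj_pairs d + one_runs d = count id d.
Proof.
rewrite one_runsE; elim: d => [|x [|y d] IHd] //=; first by case: x.
by move: IHd => /=; case: x; case: y => /=; lia.
Qed.

Lemma adj_triples_one_runs d :
  adj_triples d + 2 * one_runs d = count id d + one_runs_len1 d.
Proof.
rewrite one_runsE one_runs_len1E; elim: d => [|x [|y d] IHd] //=; first by case: x.
by move: IHd => /=; case: x; case: y; case: (head false d) => /=; lia.
Qed.

Lemma runs_dseq s : 0 < size s -> runs s = 1 + weight (dseq s).
Proof.
case: s => [|x0 s] // _; rewrite /runs size_filter count_iota0S /weight /dseq count_map.
by congr (_ + _); apply: eq_count => i /=; rewrite negb_eqb addbC.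
Qed.

Lemma card_set_nth n (b : seq bool) :
  size b = n -> #|[set i : 'I_n | nth false b i]| = count id b.
Proof.
move=> sz; rewrite -(size_mask (s := enum 'I_n)) ?size_enum_ord // mask_enum_ord.
by rewrite cardE /enum_mem -filter_predI; congr size; apply: eq_filter => i; rewrite !inE andbT.
Qed.

Definition switches (s : seq bool) : seq bool := false :: dseq s.

Lemma size_switches s : 0 < size s -> size (switches s) = size s.
Proof. by case: s => // x s _; rewrite /= size_map size_iota. Qed.

Lemma nth_switches s i : i < size s ->
  nth false (switches s) i = (0 < i) && (nth false s i.-1 != nth false s i).
Proof.
case: i => [|i] //= lt_is; have lt_i_pred : i < (size s).-1 by case: (size s) lt_is.
by rewrite /dseq (nth_map 0) ?size_iota // nth_iota // add0n negb_eqb.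
Qed.

Definition flips n (y x : n.-tuple bool) : seq bool :=
  [seq nth false y i != nth false x i | i <- iota 0 n].

Lemma size_flips n (y x : n.-tuple bool) : size (flips y x) = n.
Proof. by rewrite size_map size_iota. Qed.

Lemma nth_flips n (y x : n.-tuple bool) i : i < n ->
  nth false (flips y x) i = (nth false y i != nth false x i).
Proof. by move=> lt_in; rewrite (nth_map 0) ?size_iota // nth_iota. Qed.

Lemma flips_inj n (x : n.-tuple bool) : injective (fun y : n.-tuple bool => flips y x).
Proof.
move=> y1 y2 eq_fl; apply: eq_from_tnth => i; rewrite !(tnth_nth false).
have := congr1 (nth false ^~ i) eq_fl; rewrite /= !nth_flips //.
by case: (nth false y1 i); case: (nth false y2 i); case: (nth false x i).
Qed.

Lemma flips_xor n (x : n.-tuple bool) (b : seq bool) : size b = n ->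
  flips [tuple nth false x i (+) nth false b i | i < n] x = b.
Proof.
move=> sz; apply: (@eq_from_nth _ false) => [|i]; rewrite size_flips // => lt_in.
rewrite nth_flips // -(tnth_nth false _ (Ordinal lt_in)) tnth_mktuple /=.
by case: (nth false x i); case: (nth false b i).
Qed.

Lemma flips_phi n (E : {set 'I_n}) (x : n.-tuple bool) (i : 'I_n) :
  nth false (flips (phi E x) x) i = (i \in E) && (nth false x i.-1 != nth false x i).
Proof.
rewrite nth_flips // -tnth_nth /phi tnth_mktuple.
by case: (i \in E); rewrite ?eqxx.
Qed.

Lemma admissible_flips_phi n t (E : {set 'I_n}) (x : n.-tuple bool) :
  0 < n -> grain_pattern E -> #|E| <= t -> admissible (switches x) t (flips (phi E x) x).
Proof.
move=> n_gt0 /andP [/forall_inP E_gt0 /forall_inP E_sep] card_E.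
apply/and3P; split.
- apply/all2_implbP; split=> [|i]; first by rewrite size_flips size_switches size_tuple.
  have [lt_in | ge_in] := ltnP i n; last by rewrite nth_default ?size_flips.
  rewrite (flips_phi E x (Ordinal lt_in)) nth_switches ?size_tuple //=.
  by case/andP=> /E_gt0 -> ->.
- apply/sparseP => i; have [lt_i1n | ge_i1n] := ltnP i.+1 n; last first.
    by rewrite [nth _ _ i.+1]nth_default ?size_flips ?andbF.
  rewrite (flips_phi E x (Ordinal (ltnW lt_i1n))) (flips_phi E x (Ordinal lt_i1n)).
  apply/negP => /andP [/andP [iE _] /andP [i1E _]].
  by have /forall_inP /(_ _ i1E) := E_sep _ iE; rewrite eqxx.
- rewrite -(card_set_nth (size_flips _ _)); apply: leq_trans (subset_leq_card _) card_E.
  by apply/subsetP => i; rewrite inE flips_phi => /andP [].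
Qed.

Lemma mem_Phi_of_admissible n t (x y : n.-tuple bool) :
  admissible (switches x) t (flips y x) -> y \in Phi t x.
Proof.
case/and3P=> /all2_implbP [_ fl_sw] /sparseP fl_sep card_fl.
apply/imsetP; exists [set i : 'I_n | nth false (flips y x) i].
  rewrite inE card_set_nth ?size_flips // card_fl andbT; apply/andP; split.
    apply/forall_inP => i; rewrite inE => /fl_sw.
    by rewrite nth_switches ?size_tuple // => /andP [].
  apply/forall_inP => i; rewrite inE => fl_i; apply/forall_inP => j; rewrite inE => fl_j.
  by apply/eqP => ij; have := fl_sep i; rewrite fl_i ij fl_j.
apply: eq_from_tnth => i; rewrite /phi tnth_mktuple inE (tnth_nth false).
case: ifPn => fl_i; last by move: fl_i; rewrite nth_flips // negbK => /eqP.
have := fl_sw _ fl_i; rewrite nth_switches ?size_tuple // => /andP [_].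
by move: fl_i; rewrite nth_flips //; do 3!case: (nth false _ _).
Qed.

Lemma mem_Phi n t (x y : n.-tuple bool) :
  0 < n -> (y \in Phi t x) = admissible (switches x) t (flips y x).
Proof.
move=> n_gt0; apply/idP/idP; last exact: mem_Phi_of_admissible.
by case/imsetP=> E; rewrite inE => /andP [E_pat card_E] ->; apply: admissible_flips_phi.
Qed.

Lemma card_Phi n t (x : n.-tuple bool) :
  0 < n -> #|Phi t x| = n_admissible (switches x) t.
Proof.
move=> n_gt0; rewrite cardE /n_admissible -(size_map (fun y => flips y x)).
apply/perm_size/uniq_perm; first by rewrite map_inj_uniq ?enum_uniq //; exact: flips_inj.
  exact: uniq_admissibles.
move=> b; rewrite mem_admissibles andbT; apply/mapP/idP => [[y] | b_adm].
  by rewrite mem_enum mem_Phi // => y_adm ->.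
have size_b : size b = n.
  by case/and3P: b_adm => /all2_implbP [-> _] _ _; rewrite size_switches size_tuple.
exists [tuple nth false x i (+) nth false b i | i < n]; last by rewrite flips_xor.
by rewrite mem_enum mem_Phi // flips_xor.
Qed.

Lemma bin2_double w : 'C(w, 2) * 2 + w = w * w.
Proof. by elim: w => // w IHw; rewrite binS bin1; lia. Qed.

Local Open Scope ring_scope.

Theorem proposition2p1 (n : nat) (x : n.-tuple bool) :
  (1 <= n)%N ->
  let w := weight (dseq x) in
  let m := one_runs (dseq x) in
  let m1 := one_runs_len1 (dseq x) in
  [/\ #|Phi 1 x| = (1 + w)%N /\ (1 + w)%N = runs x,
      #|Phi 2 x| = (1 + m + 'C(w, 2))%N &
      (#|Phi 3 x|%:Z = 1 + m1%:Z + m%:Z * (w%:Z - 3) + ('C(w, 3))%:Z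
                       - ('C(w, 2))%:Z + 2 * w%:Z)].
Proof.
move=> n_gt0 w m m1; rewrite !card_Phi //.
have N1 := n_admissible1 (switches x); have N2 := n_admissible2 (switches x).
have N3 := n_admissible3 (switches x); rewrite /= !add0n -/(weight _) -/w in N1 N2 N3.
have P2 := adj_pairs_one_runs (dseq x); have P3 := adj_triples_one_runs (dseq x).
rewrite -/(weight _) -/w -/m -/m1 in P2 P3.
have C2 := bin2_double w.
by split; [rewrite runs_dseq ?size_tuple | lia | lia].
Qed.
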